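(* Let $f \in \mathrm{Inj}(\Omega)$ have at least one infinite cycle, and let $n \in \mathbb{Z}_+$ with $(f)\mathrm{C}_n > 0$. Then there is a transposition $h \in \mathrm{Fin}(\Omega)$ such that $(fh)\mathrm{C}_n = (f)\mathrm{C}_n - 1$ and $(fh)\mathrm{C}_m = (f)\mathrm{C}_m$ for all $m \in \mathbb{Z}_+ \setminus \{n\}$ (where, if $(f)\mathrm{C}_n=\aleph_0$, $(f)\mathrm{C}_n-1$ means $\aleph_0$).
   Context: $\Omega$ is a countably infinite set; maps are written on the right and composed left to right. $\mathrm{Inj}(\Omega)$ is the monoid of injective maps $\Omega\to\Omega$; $\mathrm{Fin}(\Omega)$ the group of permutations moving only finitely many points. For $f\in\mathrm{Inj}(\Omega)$, a cycle of $f$ is a nonempty $\Sigma\subseteq\Omega$ such that (a) for all $\alpha\in\Omega$, $(\alpha)f\in\Sigma$ iff $\alpha\in\Sigma$, and (b) no proper nonempty subset of $\Sigma$ satisfies (a). For $n\in\mathbb{Z}_+$, $(f)\mathrm{C}_n$ is the cardinal number of cycles of $f$ of cardinality $n$. *)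

From Stdlib Require Import List Arith.
Import ListNotations.

Definition countably_infinite (T : Type) : Prop :=
  exists e : nat -> T,
    (forall x y, e x = e y -> x = y) /\ (forall y, exists x, e x = y).

Definition injective {T : Type} (f : T -> T) : Prop :=
  forall x y, f x = f y -> x = y.

(* maps written on the right, composed left to right: (a)(fh) = ((a)f)h *)
Definition rcomp {T : Type} (f h : T -> T) : T -> T := fun a => h (f a).

Definition subset {T : Type} (A B : T -> Prop) : Prop := forall x, A x -> B x.
Definition set_eq {T : Type} (A B : T -> Prop) : Prop := forall x, A x <-> B x.
Definition nonempty {T : Type} (A : T -> Prop) : Prop := exists x, A x.

Definition f_closed {T : Type} (f : T -> T) (S : T -> Prop) : Prop :=
  forall a, S (f a) <-> S a.

Definition is_cycle {T : Type} (f : T -> T) (S : T -> Prop) : Prop :=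
  nonempty S /\ f_closed f S /\
  forall S', subset S' S -> nonempty S' -> f_closed f S' -> subset S S'.

Definition has_card {T : Type} (S : T -> Prop) (n : nat) : Prop :=
  exists l : list T, NoDup l /\ length l = n /\ forall x, S x <-> In x l.

Definition is_finite_set {T : Type} (S : T -> Prop) : Prop := exists n, has_card S n.

Definition n_cycle {T : Type} (f : T -> T) (n : nat) (S : T -> Prop) : Prop :=
  is_cycle f S /\ has_card S n.

(* Cardinal numbers that can occur here: Some k = k (finite), None = aleph_0.
   The family of n-cycles (sets counted up to extensional equality) is countable,
   since its members are pairwise distinct finite subsets of a countable set. *)
Definition Cn_is {T : Type} (f : T -> T) (n : nat) (c : option nat) : Prop :=
  match c with
  | Some k =>
      exists L : list (T -> Prop),
        length L = k /\
        (forall S, In S L -> n_cycle f n S) /\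
        (forall i j d, i < k -> j < k -> i <> j ->
            ~ set_eq (nth i L d) (nth j L d)) /\
        (forall S, n_cycle f n S -> exists S', In S' L /\ set_eq S S')
  | None =>
      forall k, exists L : list (T -> Prop),
        length L = k /\
        (forall S, In S L -> n_cycle f n S) /\
        (forall i j d, i < k -> j < k -> i <> j ->
            ~ set_eq (nth i L d) (nth j L d))
  end.

Definition card_pred (c : option nat) : option nat :=
  match c with Some k => Some (k - 1) | None => None end.

Definition is_transposition {T : Type} (h : T -> T) : Prop :=
  exists a b, a <> b /\ h a = b /\ h b = a /\
    forall x, x <> a -> x <> b -> h x = x.

(** Choose an n-cycle [C], a point [a] in it and a point [b] on an infinite
    cycle [I], and let [h] be the transposition [(a b)].  In [fh] the point
    [a^(f^(n-1))] is sent to [b] instead of back to [a], so [C] is spliced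
    into the infinite cycle through [b] and stops being a cycle, while a
    finite cycle avoiding both [a] and [b] is a cycle of [f] exactly when it
    is one of [fh].  A finite [fh]-closed set contains [a] iff it contains
    [b], and it cannot contain [b] because it would then contain [I]; hence
    the finite cycles of [fh] are exactly those of [f] other than [C]. *)

From Stdlib Require Import List Arith Lia ClassicalEpsilon FinFun.
Import ListNotations.

Section Sets.
Context {T : Type}.

Lemma set_eq_sym (A B : T -> Prop) : set_eq A B -> set_eq B A.
Proof. intros H x; symmetry; auto. Qed.

Lemma set_eq_trans (A B C : T -> Prop) : set_eq A B -> set_eq B C -> set_eq A C.
Proof. intros H1 H2 x; rewrite (H1 x); auto. Qed.

Lemma has_card_set_eq (S S' : T -> Prop) m : set_eq S S' -> has_card S m -> has_card S' m.
Proof.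
  intros E [l [Hnd [Hl H]]]; exists l; repeat split; auto;
    intros Hx; [apply H, E | apply E, H]; auto.
Qed.

Lemma has_card_unique (S : T -> Prop) m k : has_card S m -> has_card S k -> m = k.
Proof.
  intros [l1 [N1 [<- H1]]] [l2 [N2 [<- H2]]].
  apply Nat.le_antisymm; apply NoDup_incl_length; auto;
    intros x Hx; [apply H2, H1 | apply H1, H2]; auto.
Qed.

Lemma finite_of_list_cover (A : T -> Prop) l :
  (forall x, A x -> In x l) -> is_finite_set A.
Proof.
  revert A; induction l as [|y l IH]; intros A H.
  - exists 0, []; repeat split; [constructor | intros Ax; apply (H x Ax) | intros []].
  - destruct (IH (fun x => A x /\ x <> y)) as [k [l' [N [L E]]]].
    { intros x [Ax Ne]; destruct (H x Ax); [congruence | auto]. }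
    destruct (classic (A y)) as [Ay | Ny].
    + exists (S k), (y :: l'); repeat split; simpl; auto.
      * constructor; auto. intros Hi; apply E in Hi; tauto.
      * intros Ax. destruct (classic (x = y)); [left | right; apply E]; auto.
      * intros [<- | Hi]; auto. apply E in Hi; tauto.
    + exists k, l'; repeat split; auto.
      * intros Ax; apply E; split; auto; intros ->; tauto.
      * intros Hi; apply E in Hi; tauto.
Qed.

Lemma finite_subset (A B : T -> Prop) m : subset A B -> has_card B m -> is_finite_set A.
Proof.
  intros Hs [l [_ [_ H]]]; apply (finite_of_list_cover _ l).
  intros x Ax; apply H, Hs; auto.
Qed.

Definition pairwise_distinct (L : list (T -> Prop)) : Prop :=
  forall i j d, i < length L -> j < length L -> i <> j ->
    ~ set_eq (nth i L d) (nth j L d).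

Lemma pairwise_distinct_cons X L :
  pairwise_distinct (X :: L) <->
  (forall Y, In Y L -> ~ set_eq X Y) /\ pairwise_distinct L.
Proof.
  split.
  - intros H; split.
    + intros Y HY E. destruct (In_nth L Y X HY) as [i [Hi Ei]].
      apply (H 0 (S i) X); simpl; try lia. rewrite Ei; auto.
    + intros i j d Hi Hj Hij. apply (H (S i) (S j) d); simpl; lia.
  - intros [H1 H2] i j d Hi Hj Hij. simpl in Hi, Hj.
    destruct i as [|i], j as [|j]; simpl; try lia.
    + apply H1, nth_In; lia.
    + intros E; apply (H1 (nth i L d)); [apply nth_In; lia | apply set_eq_sym; auto].
    + apply H2; lia.
Qed.

Lemma pairwise_distinct_remove C L :
  pairwise_distinct L -> (exists C', In C' L /\ set_eq C C') ->
  exists L', length L' = length L - 1 /\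
    (forall S, In S L' <-> In S L /\ ~ set_eq S C) /\ pairwise_distinct L'.
Proof.
  induction L as [|X L IH]; intros HP [C' [Hin E]]; [destruct Hin |].
  apply pairwise_distinct_cons in HP as [H1 H2].
  destruct (classic (set_eq X C)) as [EX | NX].
  - exists L; split; [simpl; lia | split; [intros S; split |]]; auto.
    + intros HS; split; [right; auto |]. intros ES.
      apply (H1 S HS), (set_eq_trans _ C); auto using set_eq_sym.
    + intros [[<- | HS] NS]; tauto.
  - destruct Hin as [<- | Hin]; [destruct NX; apply set_eq_sym; auto |].
    destruct (IH H2 (ex_intro _ C' (conj Hin E))) as [L' [HL' [EL' PL']]].
    exists (X :: L'); split; [| split; [intros S; split |]].
    + destruct L; [destruct Hin | simpl in *; lia].
    + intros [<- | HS]; [split; [left |]; auto |].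
      apply EL' in HS as [? ?]; split; [right |]; auto.
    + intros [[<- | HS] NS]; [left; auto | right; apply EL'; auto].
    + apply pairwise_distinct_cons; split; auto. intros Y HY; apply H1, EL'; auto.
Qed.

Definition count_is (P : (T -> Prop) -> Prop) (c : option nat) : Prop :=
  match c with
  | Some k =>
      exists L : list (T -> Prop),
        length L = k /\ (forall S, In S L -> P S) /\
        (forall i j d, i < k -> j < k -> i <> j -> ~ set_eq (nth i L d) (nth j L d)) /\
        (forall S, P S -> exists S', In S' L /\ set_eq S S')
  | None =>
      forall k, exists L : list (T -> Prop),
        length L = k /\ (forall S, In S L -> P S) /\
        (forall i j d, i < k -> j < k -> i <> j -> ~ set_eq (nth i L d) (nth j L d))
  end.

Lemma Cn_is_count_is (f : T -> T) n c : Cn_is f n c = count_is (n_cycle f n) c.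
Proof. reflexivity. Qed.

Lemma count_is_ext (P Q : (T -> Prop) -> Prop) c :
  (forall S, P S <-> Q S) -> (count_is P c <-> count_is Q c).
Proof.
  intros H; destruct c as [k |]; simpl.
  - split; intros [L [H1 [H2 [H3 H4]]]]; exists L; repeat split; auto.
    + intros S HS; apply H, H2; auto.
    + intros S HS; apply H4, H; auto.
    + intros S HS; apply H, H2; auto.
    + intros S HS; apply H4, H; auto.
  - split; intros H0 k; destruct (H0 k) as [L [H1 [H2 H3]]];
      exists L; repeat split; auto; intros S HS; apply H, H2; auto.
Qed.

Lemma count_is_witness (P : (T -> Prop) -> Prop) c :
  count_is P c -> c <> Some 0 -> exists S, P S.
Proof.
  destruct c as [k |]; simpl; intros Hc Hpos.
  - destruct Hc as [[| S L] [HL [HP _]]]; [simpl in HL; subst; congruence |].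
    exists S; apply HP; left; auto.
  - destruct (Hc 1) as [[| S L] [HL [HP _]]]; [discriminate |].
    exists S; apply HP; left; auto.
Qed.

Lemma count_is_remove (P : (T -> Prop) -> Prop) C c :
  P C -> count_is P c -> count_is (fun S => P S /\ ~ set_eq S C) (card_pred c).
Proof.
  intros PC; destruct c as [k |]; simpl.
  - intros [L [HL [HP [HD Hall]]]].
    destruct (pairwise_distinct_remove C L) as [L' [HL' [EL' PL']]].
    + intros i j d Hi Hj; apply HD; lia.
    + destruct (Hall C PC) as [C' [? ?]]; eauto.
    + exists L'; split; [lia | split; [| split]].
      * intros S HS; apply EL' in HS as [HS NS]; auto.
      * intros i j d Hi Hj; apply PL'; lia.
      * intros S [PS NS]. destruct (Hall S PS) as [S' [HS' ES']].
        exists S'; split; auto. apply EL'; split; auto.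
        intros E; apply NS; eapply set_eq_trans; eauto.
  - intros Hc k. destruct (Hc (S k)) as [L [HL [HP HD]]].
    assert (PL : pairwise_distinct L) by (intros i j d Hi Hj; apply HD; lia).
    destruct (classic (exists C', In C' L /\ set_eq C C')) as [HCL | NCL].
    + destruct (pairwise_distinct_remove C L PL HCL) as [L' [HL' [EL' PL']]].
      exists L'; split; [lia | split].
      * intros S HS; apply EL' in HS as [HS NS]; auto.
      * intros i j d Hi Hj; apply PL'; lia.
    + destruct L as [| X L]; [discriminate |].
      apply pairwise_distinct_cons in PL as [_ PL].
      exists L; split; [simpl in HL; lia | split].
      * intros S HS; split; [apply HP; right; auto |].
        intros E; apply NCL; exists S; split; [right | apply set_eq_sym]; auto.
      * intros i j d Hi Hj; apply PL; simpl in HL; lia.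
Qed.

End Sets.

Section Cycles.
Context {T : Type} (f : T -> T).

Lemma f_closed_iter S x k : f_closed f S -> (S (Nat.iter k f x) <-> S x).
Proof.
  intros H; induction k as [| k IH]; simpl; [tauto |]. rewrite (H _); exact IH.
Qed.

Lemma cycle_sub_closed S X x :
  is_cycle f S -> f_closed f X -> S x -> X x -> subset S X.
Proof.
  intros [_ [HS Hmin]] HX Sx Xx.
  assert (HSX : subset S (fun y => S y /\ X y)).
  { apply Hmin; [intros y []; auto | exists x; auto |].
    intros y; rewrite (HS y), (HX y); tauto. }
  intros y Sy; apply HSX; auto.
Qed.

Lemma cycles_meet_eq S S' x :
  is_cycle f S -> is_cycle f S' -> S x -> S' x -> set_eq S S'.
Proof.
  intros HS HS' Sx S'x y; split; intros Hy.
  - apply (cycle_sub_closed S S' x); auto. apply HS'.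
  - apply (cycle_sub_closed S' S x); auto. apply HS.
Qed.

(* A finite closed set containing a point of a cycle contains that cycle. *)
Lemma finite_closed_avoids_infinite_cycle I S m x :
  is_cycle f I -> ~ is_finite_set I -> f_closed f S -> has_card S m -> I x -> ~ S x.
Proof.
  intros HI HIinf HS Hm Ix Sx. apply HIinf, (finite_subset I S m); auto.
  apply (cycle_sub_closed I S x); auto.
Qed.

Hypothesis Hf : injective f.

Lemma iter_add_cancel a i q : Nat.iter (i + q) f a = Nat.iter i f a -> Nat.iter q f a = a.
Proof. induction i; simpl; auto. Qed.

(* The orbit segment [a, af, ..., af^(p-1)] is closed, so it covers the cycle. *)
Lemma cycle_card_le_period C n a p :
  is_cycle f C -> C a -> has_card C n -> 0 < p -> Nat.iter p f a = a -> n <= p.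
Proof.
  intros HC Ca [l [Hnd [<- E]]] Hp Hper.
  set (O := fun x => exists j, j < p /\ x = Nat.iter j f a).
  assert (HO : subset C O).
  { destruct HC as [_ [HCcl Hmin]]. apply Hmin.
    - intros x [j [_ ->]]; apply f_closed_iter; auto.
    - exists a, 0; split; auto.
    - intros x; split.
      + intros [[| j] [Hj Ej]].
        * exists (p - 1); split; [lia |]. apply Hf. rewrite Ej.
          destruct p as [| p']; [lia |]. simpl in Hper |- *. rewrite Nat.sub_0_r; auto.
        * exists j; split; [lia | apply Hf; auto].
      + intros [j [Hj ->]]. destruct (Nat.eq_dec (S j) p) as [<- | Hne].
        * exists 0; split; auto.
        * exists (S j); split; [lia | reflexivity]. }
  replace p with (length (map (fun j => Nat.iter j f a) (seq 0 p)))
    by (rewrite length_map, length_seq; auto).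
  apply NoDup_incl_length; auto.
  intros x Hx. apply E, HO in Hx as [j [Hj Ex]].
  apply in_map_iff. exists j; split; [auto | apply in_seq; lia].
Qed.

(* Otherwise [a, af, ..., af^n] would be n+1 distinct points of the cycle. *)
Lemma cycle_iter_card C n a :
  is_cycle f C -> C a -> has_card C n -> 0 < n -> Nat.iter n f a = a.
Proof.
  intros HC Ca Hcard Hn.
  destruct (classic (exists p, 0 < p <= n /\ Nat.iter p f a = a)) as [[p [Hp Ep]] | Hno].
  - assert (n <= p) by (eapply cycle_card_le_period; eauto; lia).
    replace n with p by lia; auto.
  - exfalso. destruct Hcard as [l [Hnd [Hl E]]].
    assert (Hnd' : NoDup (map (fun j => Nat.iter j f a) (seq 0 (S n)))).
    { apply Injective_map_NoDup_in; [| apply seq_NoDup].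
      intros i j Hi Hj Eij. apply in_seq in Hi, Hj.
      destruct (Nat.lt_trichotomy i j) as [Hl' | [? | Hl']]; auto; exfalso; apply Hno.
      - exists (j - i); split; [lia |]. apply (iter_add_cancel a i).
        replace (i + (j - i)) with j by lia; auto.
      - exists (i - j); split; [lia |]. apply (iter_add_cancel a j).
        replace (j + (i - j)) with i by lia; auto. }
    apply NoDup_incl_length with (l' := l) in Hnd'.
    + rewrite length_map, length_seq in Hnd'. lia.
    + intros x Hx. apply in_map_iff in Hx as [j [<- _]].
      apply E, f_closed_iter; auto. apply HC.
Qed.

End Cycles.

Section Swap.
Context {T : Type} (a b : T).

Definition swap (x : T) : T :=
  if excluded_middle_informative (x = a) then b
  else if excluded_middle_informative (x = b) then a else x.

Lemma swap_l : swap a = b.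
Proof. unfold swap; destruct excluded_middle_informative; congruence. Qed.

Lemma swap_r : swap b = a.
Proof.
  unfold swap; destruct (excluded_middle_informative (b = a)); [congruence |].
  destruct excluded_middle_informative; congruence.
Qed.

Lemma swap_other x : x <> a -> x <> b -> swap x = x.
Proof.
  intros; unfold swap; destruct (excluded_middle_informative (x = a)); [congruence |].
  destruct excluded_middle_informative; congruence.
Qed.

Lemma swap_is_transposition : a <> b -> is_transposition swap.
Proof. intros; exists a, b; repeat split; auto using swap_l, swap_r, swap_other. Qed.

Lemma f_closed_rcomp_swap (f : T -> T) S :
  (S a <-> S b) -> (f_closed f S <-> f_closed (rcomp f swap) S).
Proof.
  intros Hab.
  assert (Hs : forall y, S (swap y) <-> S y).
  { intros y. destruct (classic (y = a)) as [-> | Na]; [rewrite swap_l; tauto |].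
    destruct (classic (y = b)) as [-> | Nb]; [rewrite swap_r; tauto |].
    rewrite swap_other; tauto. }
  unfold f_closed, rcomp; split; intros H x; rewrite <- (H x); auto.
  symmetry; auto.
Qed.

Lemma is_cycle_rcomp_swap (f : T -> T) S :
  ~ S a -> ~ S b -> (is_cycle f S <-> is_cycle (rcomp f swap) S).
Proof.
  intros Na Nb.
  assert (Hsub : forall S', subset S' S ->
            (f_closed f S' <-> f_closed (rcomp f swap) S')).
  { intros S' HS'; apply f_closed_rcomp_swap.
    split; intros H; exfalso; [apply Na | apply Nb]; apply HS'; auto. }
  unfold is_cycle; rewrite <- (Hsub S) by (intros ? ?; auto).
  split; intros [HS [Hcl Hmin]]; (split; [exact HS | split; [exact Hcl |]]);
    intros S' H1 H2 H3; apply Hmin; auto; apply (Hsub S'); auto.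
Qed.

End Swap.

Section Splice.
Context {T : Type} (f : T -> T) (Hf : injective f) (I C : T -> Prop) (a b : T) (n : nat).
Hypotheses (HI : is_cycle f I) (HIinf : ~ is_finite_set I) (Ib : I b)
  (HC : n_cycle f n C) (Ca : C a) (Hn : 0 < n).

Let g := rcomp f (swap a b).

Lemma splice_b_notin : ~ C b.
Proof.
  pose proof HC as [[_ [HCcl _]] HCcard].
  exact (finite_closed_avoids_infinite_cycle f I C n b HI HIinf HCcl HCcard Ib).
Qed.

Lemma splice_neq : a <> b.
Proof. intros E; apply splice_b_notin; rewrite <- E; exact Ca. Qed.

Lemma iter_splice_lt k : k < n -> Nat.iter k g a = Nat.iter k f a.
Proof.
  pose proof HC as [HCc HCcard].
  induction k as [| k IH]; intros Hk; simpl; auto.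
  rewrite IH by lia. unfold g, rcomp; apply swap_other.
  - intros E. enough (n <= S k) by lia.
    exact (cycle_card_le_period f Hf C n a (S k) HCc Ca HCcard (Nat.lt_0_succ k) E).
  - intros E. apply splice_b_notin. rewrite <- E.
    apply (f_closed_iter f C a (S k)); auto. apply HCc.
Qed.

Lemma iter_splice_card : Nat.iter n g a = b.
Proof.
  rewrite <- (Nat.succ_pred_pos n Hn).
  change (g (Nat.iter (pred n) g a) = b).
  rewrite iter_splice_lt by lia.
  unfold g, rcomp.
  change (f (Nat.iter (pred n) f a)) with (Nat.iter (S (pred n)) f a).
  replace (S (pred n)) with n by lia.
  rewrite (cycle_iter_card f Hf C n a); auto using swap_l; apply HC.
Qed.

Lemma splice_closed_ab S : f_closed g S -> (S a <-> S b).
Proof. intros HS; rewrite <- iter_splice_card; symmetry; apply f_closed_iter; auto. Qed.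

Lemma splice_finite_cycle S m : has_card S m -> (is_cycle g S <-> is_cycle f S /\ ~ S a).
Proof.
  intros Hm; split.
  - intros HgS.
    assert (Hab : S a <-> S b) by (apply splice_closed_ab, HgS).
    assert (HfS : f_closed f S) by (apply (f_closed_rcomp_swap a b f S Hab), HgS).
    assert (Nb : ~ S b) by exact (finite_closed_avoids_infinite_cycle f I S m b HI HIinf HfS Hm Ib).
    assert (Na : ~ S a) by tauto.
    split; [apply (is_cycle_rcomp_swap a b f S Na Nb) |]; auto.
  - intros [HfS Na].
    assert (Nb : ~ S b)
      by exact (finite_closed_avoids_infinite_cycle f I S m b HI HIinf (proj1 (proj2 HfS)) Hm Ib).
    apply (is_cycle_rcomp_swap a b f S Na Nb); auto.
Qed.

Lemma splice_n_cycle S : n_cycle g n S <-> n_cycle f n S /\ ~ set_eq S C.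
Proof.
  split.
  - intros [HgS Hcard]. apply (splice_finite_cycle S n Hcard) in HgS as [HfS Na].
    split; [split; auto |]. intros E; apply Na, E; auto.
  - intros [[HfS Hcard] NE]; split; auto.
    apply (splice_finite_cycle S n Hcard); split; auto.
    intros Sa; apply NE, (cycles_meet_eq f S C a); auto. apply HC.
Qed.

Lemma splice_other_cycle m S : m <> n -> (n_cycle g m S <-> n_cycle f m S).
Proof.
  intros Hmn; split.
  - intros [HgS Hcard]. apply (splice_finite_cycle S m Hcard) in HgS as [HfS _].
    split; auto.
  - intros [HfS Hcard]; split; auto.
    apply (splice_finite_cycle S m Hcard); split; auto.
    intros Sa; apply Hmn, (has_card_unique S); auto.
    apply (has_card_set_eq C), HC.
    apply (cycles_meet_eq f C S a); auto. apply HC.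
Qed.

End Splice.

Theorem mainTheorem10 (T : Type) (HT : countably_infinite T)
  (f : T -> T) (Hf : injective f)
  (Hinf : exists S, is_cycle f S /\ ~ is_finite_set S)
  (n : nat) (Hn : 0 < n) (c : option nat) (Hc : Cn_is f n c) (Hpos : c <> Some 0) :
  exists h : T -> T, is_transposition h /\
    Cn_is (rcomp f h) n (card_pred c) /\
    (forall m d, 0 < m -> m <> n -> (Cn_is (rcomp f h) m d <-> Cn_is f m d)).
Proof.
  destruct Hinf as [I [HI HIinf]]. destruct (proj1 HI) as [b Ib].
  rewrite Cn_is_count_is in Hc.
  destruct (count_is_witness _ _ Hc Hpos) as [C HC].
  destruct (proj1 (proj1 HC)) as [a Ca].
  exists (swap a b); split; [| split].
  - apply swap_is_transposition, (splice_neq f I C a b n HI HIinf Ib HC Ca).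
  - rewrite Cn_is_count_is.
    apply (count_is_ext (fun S => n_cycle f n S /\ ~ set_eq S C)).
    + intros S; symmetry; apply (splice_n_cycle f Hf I C a b n HI HIinf Ib HC Ca Hn).
    + apply count_is_remove; auto.
  - intros m d _ Hmn. rewrite !Cn_is_count_is.
    apply count_is_ext; intros S.
    apply (splice_other_cycle f Hf I C a b n HI HIinf Ib HC Ca Hn m S Hmn).
Qed.
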